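(* Let $n \ge 3$ and let $x_1, \dots, x_n \in \mathbb{R}$ be pairwise distinct. Then the maximum likelihood estimate $\hat\theta \in \mathbb{H}$ of the sample from the Cauchy distribution satisfies $$\sum_{j=1}^n \frac{x_j - \hat\theta}{x_j - \overline{\hat\theta}} = 0.$$
   Context: $\mathbb{H} = \{\theta\in\mathbb{C}:\Im\theta>0\}$. The Cauchy distribution with parameter $\theta = \mu + i\sigma\in\mathbb{H}$ has density $f(x;\theta) = \frac{\sigma}{\pi}\frac{1}{(x-\mu)^2+\sigma^2}$; the maximum likelihood estimate is the (unique) maximizer over $\mathbb{H}$ of $\prod_{j=1}^n f(x_j;\theta)$. *)

From HB Require Import structures.
From mathcomp Require Import all_boot all_order all_algebra.
From mathcomp Require Import complex.
From mathcomp Require Import reals trigo.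
Set Implicit Arguments. Unset Strict Implicit. Unset Printing Implicit Defensive.
Import Order.TTheory GRing.Theory Num.Theory.
Local Open Scope ring_scope.


Definition cauchy_density (R : realType) (theta : R[i]) (x : R) : R :=
  complex.Im theta / pi / ((x - complex.Re theta) ^+ 2 + (complex.Im theta) ^+ 2).

Definition likelihood (R : realType) (n : nat) (x : 'I_n -> R) (theta : R[i]) : R :=
  \prod_(j < n) cauchy_density theta (x j).

Definition is_MLE (R : realType) (n : nat) (x : 'I_n -> R) (theta : R[i]) : Prop :=
  0 < complex.Im theta /\
  forall theta' : R[i], 0 < complex.Im theta' -> likelihood x theta' <= likelihood x theta.

(* At a maximum theta = mu + i sigma of the likelihood both scores vanish.
   With D_j = |x_j - theta|^2 = (x_j - mu)^2 + sigma^2, shifting mu gives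
   sum_j (x_j - mu) / D_j = 0 and rescaling sigma gives sum_j 2 sigma^2 / D_j = n.
   Since (x_j - theta) / (x_j - conj theta) = 1 - 2 sigma^2 / D_j
   - 2 i sigma (x_j - mu) / D_j, the real and imaginary parts of the sum vanish.
   No calculus is needed: along the paths mu + t and sigma (1 + t) maximality is
   an inequality between polynomials in t, and a polynomial with a local minimum
   at 0 has a vanishing linear coefficient. *)

From HB Require Import structures.
From mathcomp Require Import all_boot all_order all_algebra.
From mathcomp Require Import complex.
From mathcomp Require Import reals trigo.
From mathcomp Require Import ring lra.

Set Implicit Arguments.
Unset Strict Implicit.
Unset Printing Implicit Defensive.

Import Order.TTheory GRing.Theory Num.Theory.
Local Open Scope ring_scope.

Section PolyFermat.
Variable R : realFieldType.

Lemma norm_horner_sub_linear_le (p : {poly R}) (t : R) : `|t| <= 1 ->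
  `|p.[t] - p`_0 - p`_1 * t| <= (\sum_(i < size p) `|p`_i.+2|) * t ^+ 2.
Proof.
move=> t_le1; rewrite (@horner_coef_wide _ (size p).+2) ?leqW //.
rewrite 2!big_ord_recl /= expr0 mulr1 expr1.
set S := \sum_(i < _) _; rewrite (_ : _ - _ - _ = S); last by ring.
rewrite mulr_suml; apply: le_trans (ler_norm_sum _ _ _) _; apply: ler_sum => i _.
rewrite (_ : bump 0 (bump 0 i) = (2 + i)%N) // exprD mulrA normrM normrM.
rewrite [`|t ^+ 2|]ger0_norm ?sqr_ge0 // -[X in _ <= X]mulr1 ler_wpM2l //.
  by rewrite mulr_ge0 ?sqr_ge0.
by rewrite normrX exprn_ile1.
Qed.

Lemma coef1_eq0_of_min0 (p : {poly R}) :
  (forall t, -1 < t < 1 -> p.[0] <= p.[t]) -> p`_1 = 0.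
Proof.
move=> p_min; apply/eqP/negPn/negP => c_neq0.
set c := p`_1; set C := \sum_(i < size p) `|p`_i.+2|.
have C_ge0 : 0 <= C by apply: sumr_ge0.
have c_gt0 : 0 < `|c| by rewrite normr_gt0.
pose e := (C + `|c| + 1)^-1.
have e_gt0 : 0 < e by rewrite invr_gt0; lra.
have Ce_lt1 : C * e < 1 by rewrite ltr_pdivrMr; lra.
have ce_lt1 : `|c| * e < 1 by rewrite ltr_pdivrMr; lra.
pose t := - c * e.
have t_lt1 : `|t| < 1 by rewrite normrM normrN gtr0_norm.
have := p_min t; rewrite -ltr_norml => /(_ t_lt1); rewrite horner_coef0.
have := le_trans (ler_norm _) (norm_horner_sub_linear_le p (ltW t_lt1)).
have -> : c * t = - (c ^+ 2 * e) by rewrite /t; ring.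
have -> : C * t ^+ 2 = c ^+ 2 * e * (C * e) by rewrite /t; ring.
have : c ^+ 2 * e * (C * e) < c ^+ 2 * e by rewrite gtr_pMr // mulr_gt0 // exprn_even_gt0.
lra.
Qed.

End PolyFermat.

Lemma coef1_prod (F : fieldType) (I : Type) (s : seq I) (P : I -> {poly F}) :
  (forall i, (P i)`_0 != 0) ->
  (\prod_(i <- s) P i)`_1 = (\prod_(i <- s) (P i)`_0) * \sum_(i <- s) (P i)`_1 / (P i)`_0.
Proof.
move=> P0_neq0; elim: s => [|a s IHs]; first by rewrite !big_nil coef1 mulr0.
rewrite !big_cons coefM big_ord_recr big_ord_recl big_ord0 /= IHs coef0_prod.
by field; apply: P0_neq0.
Qed.

Local Open Scope complex_scope.

Definition sqdist (R : pzRingType) (y mu s : R) := (y - mu) ^+ 2 + s ^+ 2.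

Lemma sqdist_gt0 (R : realDomainType) (y mu s : R) : s != 0 -> 0 < sqdist y mu s.
Proof. by move=> s_neq0; rewrite ltr_wpDl ?sqr_ge0 // exprn_even_gt0. Qed.

Section CauchyLikelihood.
Variables (R : realType) (n : nat) (x : 'I_n -> R).

Lemma prod_sqdist_gt0 (mu s : R) : s != 0 -> 0 < \prod_j sqdist (x j) mu s.
Proof. by move=> s_neq0; apply: prodr_gt0 => j _; apply: sqdist_gt0. Qed.

Lemma likelihoodE (mu s : R) :
  likelihood x (mu +i* s) = (s / pi) ^+ n / \prod_j sqdist (x j) mu s.
Proof. by rewrite /likelihood /cauchy_density /= prodf_div prodr_const card_ord. Qed.

Lemma is_MLE_prod_le (mu s mu' s' : R) : is_MLE x (mu +i* s) -> 0 < s' ->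
  s' ^+ n * \prod_j sqdist (x j) mu s <= s ^+ n * \prod_j sqdist (x j) mu' s'.
Proof.
case=> /= s_gt0 MLE s'_gt0; have := MLE (mu' +i* s') s'_gt0.
rewrite !likelihoodE ler_pdivrMr ?prod_sqdist_gt0 ?lt0r_neq0 //.
rewrite mulrAC ler_pdivlMr ?prod_sqdist_gt0 ?lt0r_neq0 //.
by rewrite !exprMn -!mulrA !(mulrCA _ (pi^-1 ^+ n)) ler_pM2l ?exprn_gt0 ?invr_gt0 ?pi_gt0.
Qed.

Variables (mu s : R).
Hypothesis MLE : is_MLE x (mu +i* s).

Let s_gt0 : 0 < s. Proof. by case: MLE. Qed.
Let s_neq0 : s != 0. Proof. exact: lt0r_neq0. Qed.

Lemma sum_score_mu : \sum_j (x j - mu) / sqdist (x j) mu s = 0.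
Proof.
pose P j := Poly [:: sqdist (x j) mu s; - (2 * (x j - mu)); 1].
have P_horner j t : (P j).[t] = sqdist (x j) (mu + t) s.
  by rewrite horner_Poly /= /sqdist; ring.
have : (\prod_j P j)`_1 = 0.
  apply: coef1_eq0_of_min0 => t _; rewrite !horner_prod.
  under eq_bigr do rewrite P_horner addr0.
  under [X in _ <= X]eq_bigr do rewrite P_horner.
  by have := is_MLE_prod_le (mu + t) MLE s_gt0; rewrite ler_pM2l ?exprn_gt0.
rewrite coef1_prod => [|j]; last by rewrite coef_Poly lt0r_neq0 ?sqdist_gt0.
rewrite (eq_bigr (fun j => sqdist (x j) mu s)) => [|j _]; last by rewrite coef_Poly.
have -> : \sum_j (P j)`_1 / (P j)`_0 = -2 * \sum_j (x j - mu) / sqdist (x j) mu s.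
  by rewrite mulr_sumr; apply: eq_bigr => j _; rewrite !coef_Poly /=; ring.
by move/eqP; rewrite !mulf_eq0 gt_eqF ?prod_sqdist_gt0 //= oppr_eq0 pnatr_eq0 => /eqP.
Qed.

Lemma sum_score_sigma : \sum_j 2 * s ^+ 2 / sqdist (x j) mu s = n%:R.
Proof.
pose Q j := Poly [:: sqdist (x j) mu s; 2 * s ^+ 2; s ^+ 2].
have Q_horner j t : (Q j).[t] = sqdist (x j) mu (s * (1 + t)).
  by rewrite horner_Poly /= /sqdist; ring.
pose D := \prod_j sqdist (x j) mu s.
have D_gt0 : 0 < D by apply: prod_sqdist_gt0.
pose F := \prod_j Q j - D *: \prod_(j < n) Poly [:: 1; 1].
have F_horner t : F.[t] = \prod_j sqdist (x j) mu (s * (1 + t)) - D * (1 + t) ^+ n.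
  rewrite /F hornerD hornerN hornerZ !horner_prod prodr_const card_ord.
  under eq_bigr do rewrite Q_horner.
  by rewrite horner_Poly /= mul0r add0r mul1r [t + 1]addrC.
have : F`_1 = 0.
  apply: coef1_eq0_of_min0 => t /andP[t_gtN1 _].
  have t1_gt0 : 0 < 1 + t by rewrite -ltrBlDl sub0r.
  rewrite !F_horner addr0 mulr1 expr1n mulr1 subrr subr_ge0 mulrC.
  have := is_MLE_prod_le mu MLE (mulr_gt0 s_gt0 t1_gt0).
  by rewrite exprMn -mulrA ler_pM2l ?exprn_gt0.
have -> : F`_1 = D * (\sum_j 2 * s ^+ 2 / sqdist (x j) mu s - n%:R).
  rewrite coefB coefZ !coef1_prod => [|j|j]; rewrite ?coef_Poly ?oner_neq0 //=; last first.
    by rewrite lt0r_neq0 ?sqdist_gt0.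
  rewrite big1_eq divr1 sumr_const card_ord mul1r mulrBr.
  rewrite (eq_bigr (fun j => sqdist (x j) mu s)) => [|j _]; last by rewrite coef_Poly.
  by congr (_ * _ - _); apply: eq_bigr => j _; rewrite !coef_Poly.
by move/eqP; rewrite mulf_eq0 gt_eqF //= subr_eq0 => /eqP.
Qed.

End CauchyLikelihood.

Lemma div_sub_conjE (R : rcfType) (y mu s : R) : s != 0 ->
  (y%:C - (mu +i* s)) / (y%:C - (mu +i* s)^*) =
  (1 - 2 * s ^+ 2 / sqdist y mu s)%:C - 'i * (2 * s * ((y - mu) / sqdist y mu s))%:C.
Proof.
move=> s_neq0; have D_neq0 := lt0r_neq0 (sqdist_gt0 y mu s_neq0).
have den_neq0 : y%:C - (mu +i* s)^* != 0.
  by rewrite eq_complex /= negb_and sub0r opprK s_neq0 orbT.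
apply: (mulIf den_neq0); rewrite divfK //.
apply/eqP; rewrite eq_complex /=; apply/andP; split; apply/eqP.
all: by rewrite /sqdist in D_neq0 *; field.
Qed.

Theorem mainTheorem7 (R : realType) (n : nat) (hn : (3 <= n)%N)
  (x : 'I_n -> R) (hx : injective x) (theta : R[i]) (hmle : is_MLE x theta) :
  \sum_(j < n) (((x j)%:C - theta) / ((x j)%:C - theta^*)) = 0.
Proof.
(* [hn] and [hx] only ensure that the MLE exists; here it is given. *)
case: theta hmle => mu s MLE; have s_neq0 : s != 0 by case: MLE => /= /lt0r_neq0.
under eq_bigr do rewrite div_sub_conjE //.
rewrite sumrB -mulr_sumr -!rmorph_sum -mulr_sumr (sum_score_mu MLE) mulr0.
by rewrite sumrB sumr_const card_ord (sum_score_sigma MLE) subrr mulr0 subr0.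
Qed.
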